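(* Let $(\mathcal{X},\mathbf{h})$ be a representable polymatroid, and for $0\le\epsilon\le\mathbf{h}(\mathcal{X})$ define $\mathbf{g}_\epsilon(\mathcal{A})=\min\big(\mathbf{h}(\mathcal{A}),\ \mathbf{h}(\mathcal{X})-\epsilon\big)$ for all $\mathcal{A}\subseteq\mathcal{X}$. Then $(\mathcal{X},\mathbf{g}_\epsilon)$ is almost representable for every $0\le\epsilon\le\mathbf{h}(\mathcal{X})$. Moreover, if $\epsilon\in\mathbb{Z}$ then $(\mathcal{X},\mathbf{g}_\epsilon)$ is representable.
   Context: A polymatroid $(\mathcal{X},\mathbf{h})$ is a finite ground set $\mathcal{X}$ with a function $\mathbf{h}:2^{\mathcal{X}}\to\mathbb{R}_{\ge0}$ satisfying $\mathbf{h}(\emptyset)=0$, monotonicity, and submodularity. Let $\mathcal{X}=\{X_1,\dots,X_n\}$ and $X_\alpha=\{X_i:i\in\alpha\}$ for $\alpha\subseteq\{1,\dots,n\}$. The polymatroid is $q$-representable if there exist subspaces $V_1,\dots,V_n$ of a vector space over the finite field $\mathbb{F}_q$ with $\mathbf{h}(X_\alpha)=\dim\langle V_i: i\in\alpha\rangle$ for all $\alpha$ (where $\langle\cdot\rangle$ denotes the span); it is representable if it is $q$-representable for some $q$. Viewing rank functions as vectors in $\mathbb{R}^{2^{|\mathcal{X}|}}$, $\mathbf{h}$ is almost representable if there exist representable rank functions $\mathbf{g}_i$ on $\mathcal{X}$ and positive reals $c_i$ with $\mathbf{h}=\lim_{i\to\infty}c_i\mathbf{g}_i$. *)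

From HB Require Import structures.
From mathcomp Require Import all_boot all_order all_algebra all_field.
From mathcomp Require Import archimedean.
From mathcomp Require Import all_classical all_reals topology normedtype sequences.
Set Implicit Arguments. Unset Strict Implicit. Unset Printing Implicit Defensive.
Import Order.TTheory GRing.Theory Num.Theory.
Local Open Scope ring_scope.
Local Open Scope classical_set_scope.

(* Ground set X = {X_1,...,X_n} is modelled by 'I_n; subsets X_alpha by {set 'I_n}.
   A rank function is a real-valued function on {set 'I_n}. *)

(* dim < V_i : i in A >, where each subspace V_i of F^m is the row space of
   the m x m matrix V i. *)
Definition span_dim (F : fieldType) (n m : nat) (V : 'I_n -> 'M[F]_m)
  (A : {set 'I_n}) : nat :=
  \rank (\sum_(i in A) V i)%MS.

Definition q_representable (R : realType) (q n : nat) (h : {set 'I_n} -> R) : Prop :=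
  exists (F : finFieldType) (m : nat) (V : 'I_n -> 'M[F]_m),
    #|F| = q /\ forall A : {set 'I_n}, h A = (span_dim V A)%:R.

Definition representable (R : realType) (n : nat) (h : {set 'I_n} -> R) : Prop :=
  exists q : nat, q_representable q h.

Definition almost_representable (R : realType) (n : nat) (h : {set 'I_n} -> R) : Prop :=
  exists (g : nat -> {set 'I_n} -> R) (c : nat -> R),
    (forall k, representable (g k)) /\ (forall k, 0 < c k) /\
    forall A : {set 'I_n}, (c k * g k A) @[k --> \oo] --> (h A : R^o).

Definition truncate (R : realType) (n : nat) (h : {set 'I_n} -> R) (eps : R)
  : {set 'I_n} -> R :=
  fun A => Num.min (h A) (h [set: 'I_n]%SET - eps).

From HB Require Import structures.
From mathcomp Require Import all_boot all_order all_algebra all_field.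
From mathcomp Require Import archimedean.
From mathcomp Require Import all_classical all_reals topology normedtype sequences.
From mathcomp Require Import interval_inference zify lra.
Set Implicit Arguments. Unset Strict Implicit. Unset Printing Implicit Defensive.
Import Order.TTheory GRing.Theory Num.Theory.
Local Open Scope ring_scope.

(* Let V_1, ..., V_n span a space W of dimension r over a finite field with more
   than 2^n elements. Then W has a vector v lying in none of the spans of rank
   < r, so dividing every V_i by the line of v lowers exactly the rank-r spans
   by one: this realises min(h, h(X) - 1). Iterating, and summing j copies of
   the representation, realises min(j h, j h(X) - e) for all naturals j, e; for
   j = 1 this is the integral case, and (1/j) min(j h, j h(X) - floor(j eps))
   converges to the truncation at any real eps. *)

Lemma finField_ext_card_gt (F : finFieldType) :
  exists (K : finFieldType) (f : {rmorphism F -> K}), (#|F| < #|K|)%N.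
Proof.
(* [p] has no root in [F], so its roots in a splitting field lie outside [F]. *)
pose p : {poly F} := \prod_(x : F) ('X - x%:P) + 1.
have p_gt1 : (1 < size p)%N.
  have : (0 < size (index_enum F))%N by case: (index_enum F) (mem_index_enum (0:F)).
  by move=> H; rewrite /p size_polyDl size_prod_XsubC // size_polyC oner_neq0.
have p_neq0 : p != 0 by rewrite -size_poly_gt0 ltnW.
have pF1 (a : F) : p.[a] = 1.
  rewrite /p hornerD hornerC horner_prod.
  by rewrite (bigD1 a) //= hornerXsubC subrr mul0r add0r.
have [L [rs def_p _]] := FinSplittingFieldFor p_neq0.
set K := finvect_type L; exists K, (in_alg K).
case: rs def_p => [|z rs] def_p.
  by move/eqp_size: def_p p_gt1; rewrite big_nil size_poly1 size_map_poly => ->.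
have pz : root (map_poly (in_alg L) p) z.
  by rewrite (eqp_root def_p) root_prod_XsubC mem_head.
have zNF : z \notin [set (in_alg K) x | x in F].
  apply/imsetP => -[a _ za]; move: pz; rewrite /root za.
  by rewrite (horner_map (in_alg L)) pF1 rmorph1 oner_eq0.
rewrite -(card_imset (mem F) (fmorph_inj (in_alg K))) -cardsT.
apply: proper_card; rewrite properT; apply: contraNneq zNF => ->.
exact: finset.in_setT.
Qed.

Lemma finField_ext_card_large (F : finFieldType) (N : nat) :
  exists (K : finFieldType) (f : {rmorphism F -> K}), (N < #|K|)%N.
Proof.
elim: N => [|N [K [f ltNK]]].
  by exists F, idfun; apply/card_gt0P; exists 0.
have [K' [g ltKK']] := finField_ext_card_gt K.
by exists K', (g \o f)%FUN; apply: leq_ltn_trans ltKK'.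
Qed.

Lemma span_dim_map_mx (F K : fieldType) (f : {rmorphism F -> K}) n m
    (V : 'I_n -> 'M[F]_m) (A : {set 'I_n}) :
  span_dim (fun i => map_mx f (V i)) A = span_dim V A.
Proof.
rewrite /span_dim -(mxrank_map f); apply/esym/eqmx_rank.
apply: (big_rec2 (fun X Y => (map_mx f X == Y)%MS)).
  by rewrite map_mx0 !submx_refl.
move=> i X Y _ /eqmxP eqXY; apply/eqmxP.
exact: eqmx_trans (map_addsmx f _ _) (adds_eqmx (eqmx_refl _) eqXY).
Qed.

Section SpanDim.
Variable K : fieldType.

Lemma sumsmx_subset n m (V : 'I_n -> 'M[K]_m) (A B : {set 'I_n}) :
  A \subset B -> (\sum_(i in A) V i <= \sum_(i in B) V i)%MS.
Proof.
move=> sAB; apply/sumsmx_subP => i iA.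
by rewrite (sumsmx_sup i) ?(fintype.subsetP sAB).
Qed.

Lemma span_dim_subset n m (V : 'I_n -> 'M[K]_m) (A B : {set 'I_n}) :
  A \subset B -> (span_dim V A <= span_dim V B)%N.
Proof. by move=> sAB; apply/mxrankS/sumsmx_subset. Qed.

Section DiagBlock.
Variables m1 m2 : nat.
Let Pl : 'M[K]_(m1, m1 + m2) := row_mx 1%:M 0.
Let Pr : 'M[K]_(m2, m1 + m2) := row_mx 0 1%:M.

Let diag_block_eq_adds (A : 'M[K]_m1) (B : 'M[K]_m2) :
  (block_mx A 0 0 B :=: A *m Pl + B *m Pr)%MS.
Proof.
rewrite block_mxEv /Pl /Pr !mul_mx_row !mulmx1 !mulmx0.
exact/eqmx_sym/addsmxE.
Qed.

Lemma addsmx_diag_block (A C : 'M[K]_m1) (B D : 'M[K]_m2) :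
  (block_mx A 0 0 B + block_mx C 0 0 D :=: block_mx (A + C)%MS 0 0 (B + D)%MS)%MS.
Proof.
apply: eqmx_trans (adds_eqmx (diag_block_eq_adds A B) (diag_block_eq_adds C D)) _.
apply: eqmx_sym; apply: eqmx_trans (diag_block_eq_adds _ _) _.
apply: eqmx_trans (adds_eqmx (addsmxMr A C Pl) (addsmxMr B D Pr)) _.
rewrite -!addsmxA [(C *m Pl + _)%MS]addsmxA [(C *m Pl + B *m Pr)%MS]addsmxC -!addsmxA.
exact: eqmx_refl.
Qed.

Lemma span_dim_diag_block n (V1 : 'I_n -> 'M[K]_m1) (V2 : 'I_n -> 'M[K]_m2) A :
  span_dim (fun i => block_mx (V1 i) 0 0 (V2 i)) A = (span_dim V1 A + span_dim V2 A)%N.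
Proof.
rewrite /span_dim -rank_diag_block_mx; apply: eqmx_rank.
apply: (big_rec3 (fun X Y Z => (X == block_mx Y 0 0 Z)%MS)).
  by rewrite block_mx0 !submx_refl.
move=> i X Y Z _ /eqmxP eqX; apply/eqmxP.
exact: eqmx_trans (adds_eqmx (eqmx_refl _) eqX) (addsmx_diag_block _ _ _ _).
Qed.

End DiagBlock.

Lemma exists_span_dim_muln n m (V : 'I_n -> 'M[K]_m) (k : nat) :
  exists m' (V' : 'I_n -> 'M[K]_m'), forall A, span_dim V' A = (k * span_dim V A)%N.
Proof.
elim: k => [|k [m' [V' kV]]].
  exists 0%N, (fun _ => 0) => A; rewrite mul0n.
  by apply/eqP; rewrite -leqn0 /span_dim rank_leq_row.
exists (m + m')%N, (fun i => block_mx (V i) 0 0 (V' i)) => A.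
by rewrite span_dim_diag_block kV mulSn.
Qed.

Lemma kermx_cokermx_rV m (v : 'rV[K]_m) : (kermx (cokermx v) :=: v)%MS.
Proof.
apply/eqmxP/andP; split; last by rewrite sub_kermx mulmx_coker.
by apply/row_subP => i; rewrite submxE -row_mul mulmx_ker row0.
Qed.

Lemma mxrank_mul_cokermx_rV p m (B : 'M[K]_(p, m)) (v : 'rV[K]_m) : v != 0 ->
  \rank (B *m cokermx v) = (\rank B - (v <= B)%MS)%N.
Proof.
move=> v_neq0; rewrite -(mxrank_mul_ker B (cokermx v)).
rewrite (cap_eqmx (eqmx_refl B) (kermx_cokermx_rV v)).
have := mxrank_leqif_sup (capmxSr B v).
rewrite rank_rV v_neq0 sub_capmx submx_refl andbT.
case: (v <= B)%MS => [[_ rk1] | /ltn_leqif]; first by rewrite (eqP rk1) addnK.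
by rewrite ltnS leqn0 => /eqP->; rewrite addn0 subn0.
Qed.

End SpanDim.

Section FinField.
Variable K : finFieldType.

Definition rowspace_set p m (B : 'M[K]_(p, m)) := [set u : 'rV[K]_m | (u <= B)%MS].

Lemma card_rowspace_set p m (B : 'M[K]_(p, m)) :
  #|rowspace_set B| = (#|K| ^ \rank B)%N.
Proof.
have -> : rowspace_set B = [set x *m row_base B | x : 'rV[K]_(\rank B)].
  apply/setP => u; rewrite inE; apply/idP/imsetP.
    by rewrite -(eq_row_base B) => /submxP[x ->]; exists x.
  by move=> [x _ ->]; rewrite -(eq_row_base B) submxMl.
rewrite card_imset; last exact: row_free_inj (row_base_free B).
by rewrite card_mx mul1n.
Qed.

(* The [U i] hold at most [#|I| * #|K| ^ (r - 1) < #|K| ^ r] vectors. *)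
Lemma rV_avoid_subspaces (I : finType) (P : pred I) m (U : I -> 'M[K]_m) (W : 'M[K]_m) :
  (#|I| < #|K|)%N -> {in P, forall i, \rank (U i) < \rank W}%N ->
  exists2 v : 'rV_m, (v <= W)%MS & {in P, forall i, ~~ (v <= U i)%MS}.
Proof.
move=> ltIK ltUW; have [rW0|rW_gt0] := posnP (\rank W).
  by exists 0; rewrite ?sub0mx // => i /ltUW; rewrite rW0.
pose C := \bigcup_(i in P) rowspace_set (U i).
have ltCW : (#|C| < #|rowspace_set W|)%N.
  have leC : (#|C| <= \sum_(i in P) #|rowspace_set (U i)|)%N.
    rewrite /C; elim/big_ind2: _ => [|x X y Y leX leY|//]; first by rewrite cards0.
    by apply: leq_trans (leq_card_setU X Y) _; apply: leq_add.
  apply: leq_ltn_trans leC _; rewrite card_rowspace_set -(prednK rW_gt0) expnS.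
  apply: (@leq_ltn_trans (#|I| * #|K| ^ (\rank W).-1)%N); last first.
    by rewrite ltn_mul2r expn_gt0 (leq_ltn_trans _ ltIK).
  apply: leq_trans (leq_mul (max_card P) (leqnn _)).
  rewrite -sum_nat_const; apply: leq_sum => i Pi.
  by rewrite card_rowspace_set leq_pexp2l ?(leq_ltn_trans _ ltIK) // -ltnS prednK ?ltUW.
have [v Wv Cv] : exists2 v, v \in rowspace_set W & v \notin C.
  by apply/subsetPn; apply: contraTN ltCW => /subset_leq_card; rewrite leqNgt.
exists v; first by rewrite inE in Wv.
move=> i Pi; apply: contra Cv => Uv.
by apply/bigcupP; exists i; rewrite ?inE.
Qed.

Lemma exists_span_dim_truncate1 n m (V : 'I_n -> 'M[K]_m) :
  (#|{set 'I_n}| < #|K|)%N ->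
  exists V' : 'I_n -> 'M[K]_m, forall A,
    span_dim V' A = minn (span_dim V A) (span_dim V [set: 'I_n]%SET).-1.
Proof.
move=> Kbig; pose W (A : {set 'I_n}) := (\sum_(i in A) V i)%MS.
pose r := span_dim V [set: 'I_n]%SET.
have le_r A : (span_dim V A <= r)%N by apply/span_dim_subset/finset.subsetT.
have [r0|r_gt0] := posnP r.
  by exists V => A; move: (le_r A); rewrite -/r r0 leqn0 => /eqP->.
have [v Wv vNW] := @rV_avoid_subspaces _ [pred A | span_dim V A < r]%N _ W
  (W [set: 'I_n]%SET) Kbig (fun A => id).
have v_neq0 : v != 0.
  have /vNW : finset.set0 \in [pred A | span_dim V A < r]%N.
    by rewrite inE /span_dim big_set0 mxrank0.
  by apply: contraNneq => ->; rewrite sub0mx.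
exists (fun i => V i *m cokermx v) => A.
rewrite /span_dim -(sumsmxMr _ V (cokermx v)).
rewrite mxrank_mul_cokermx_rV // -/(W A) -/(span_dim V A).
have [ltAr|geAr] := ltnP (span_dim V A) r.
  by rewrite (negbTE (vNW A ltAr)) subn0; apply/esym/minn_idPl; rewrite -ltnS prednK.
have rA : span_dim V A = r by apply/eqP; rewrite eqn_leq le_r.
have WvA : (v <= W A)%MS.
  apply: submx_trans Wv _.
  rewrite -(mxrank_leqif_sup (sumsmx_subset V (finset.subsetT A))).2.
  by apply/eqP; rewrite -/(span_dim V A) rA.
by rewrite WvA rA subn1; apply/esym/minn_idPr/leq_pred.
Qed.

Lemma exists_span_dim_truncate n m (V : 'I_n -> 'M[K]_m) (k : nat) :
  (#|{set 'I_n}| < #|K|)%N ->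
  exists V' : 'I_n -> 'M[K]_m, forall A,
    span_dim V' A = minn (span_dim V A) (span_dim V [set: 'I_n]%SET - k).
Proof.
move=> Kbig; elim: k => [|k [V' V'E]].
  by exists V => A; rewrite subn0; apply/esym/minn_idPl/span_dim_subset/finset.subsetT.
have [V'' V''E] := exists_span_dim_truncate1 V' Kbig.
exists V'' => A; rewrite V''E !V'E.
have := span_dim_subset V (finset.subsetT A); lia.
Qed.

End FinField.

Lemma representable_truncate_muln (R : realType) n (F : finFieldType) m
    (V : 'I_n -> 'M[F]_m) (j e : nat) :
  representable (fun A : {set 'I_n} =>
    ((minn (j * span_dim V A) (j * span_dim V [set: 'I_n]%SET - e))%:R : R)).
Proof.
have [K [f Kbig]] := finField_ext_card_large F #|{set 'I_n}|.
have [m' [V' V'E]] := exists_span_dim_muln (fun i => map_mx f (V i)) j.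
have [V'' V''E] := exists_span_dim_truncate V' e Kbig.
exists #|K|, K, m', V''; split => // A.
by rewrite V''E !V'E !span_dim_map_mx.
Qed.

Lemma dist_min_subr_le (R : realDomainType) (a b eps eps' u : R) :
  eps' <= eps -> eps < eps' + u ->
  `|Num.min a (b - eps) - Num.min a (b - eps')| <= u.
Proof.
move=> le_eps lt_eps.
have [] := leP a (b - eps); have [] := leP a (b - eps');
by rewrite ler_norml; lra.
Qed.

(* [truncn (t * eps) / t] lies in [(eps - 1/t, eps]]. *)
Lemma dist_truncate_rescaled (R : realType) (a b t : nat) (eps : R) :
  (a <= b)%N -> (0 < t)%N -> 0 <= eps <= b%:R ->
  `|Num.min (a%:R : R) (b%:R - eps) -
    t%:R^-1 * (minn (t * a) (t * b - Num.truncn (t%:R * eps)))%:R| <= t%:R^-1.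
Proof.
move=> le_ab t_gt0 /andP[eps_ge0 eps_le]; set e := Num.truncn (t%:R * eps).
have t_gt0' : 0 < t%:R :> R by rewrite ltr0n.
have t_neq0 : t%:R != 0 :> R by rewrite gt_eqF.
have teps_ge0 : 0 <= t%:R * eps :> R by rewrite mulr_ge0.
have /andP[le_e lt_e] := truncn_itv teps_ge0; rewrite -/e in le_e lt_e.
have le_etb : (e <= t * b)%N.
  rewrite -(ler_nat R) natrM; apply: le_trans le_e _.
  by rewrite ler_wpM2l.
rewrite -minEnat natr_min natrB // !natrM.
rewrite (minr_pMr _ _ (ltW _)) ?invr_gt0 ?ltr0n // mulrBr !mulKf //.
apply: dist_min_subr_le.
  by rewrite ler_pdivrMl ?ltr0n.
by rewrite -(ltr_pM2l t_gt0') mulrDr mulrA !(divff t_neq0) mul1r natr1.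
Qed.

Theorem theorem2 (R : realType) (n : nat) (h : {set 'I_n} -> R) :
  representable h ->
  forall eps : R, 0 <= eps <= h [set: 'I_n]%SET ->
    almost_representable (truncate h eps) /\
    (eps \is a Num.int -> representable (truncate h eps)).
Proof.
move=> [q [F [m [V [_ hV]]]]] eps; rewrite hV => /andP[eps_ge0 eps_le].
have le_T A : (span_dim V A <= span_dim V [set: 'I_n]%SET)%N.
  exact/span_dim_subset/finset.subsetT.
split.
  pose t j := j.+1.
  exists (fun j A => ((minn (t j * span_dim V A)
      (t j * span_dim V [set: 'I_n]%SET - Num.truncn ((t j)%:R * eps)))%:R : R)).
  exists (fun j => (t j)%:R^-1); split; first by move=> j; apply: representable_truncate_muln.
  split; first by move=> j; rewrite invr_gt0 ltr0n.
  move=> A; rewrite /truncate !hV; apply/(@cvgrPdist_le R R^o) => u u_gt0.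
  apply: filterS (near_infty_natSinv_lt (PosNum u_gt0)) => j /ltW; apply: le_trans.
  by apply: dist_truncate_rescaled; rewrite ?le_T ?eps_ge0 ?eps_le.
move=> eps_int; have /natrP[k eps_k] : eps \is a Num.nat by rewrite -intrEge0.
rewrite eps_k ler_nat in eps_le.
have [q' [K [m' [V' [cardK V'E]]]]] := representable_truncate_muln R V 1 k.
exists q', K, m', V'; split => // A.
by rewrite -V'E /truncate !hV eps_k !mul1n -minEnat natr_min natrB.
Qed.
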